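(* For every rational $c$ for which $f_c(x)=x^2+c$ has a rational $3$-cycle, the numerator of the rational number $c^3+2c^2+c+1$ (in lowest terms) is divisible by at least three distinct primes.
   Context: A rational $3$-cycle of $f_c$ is the orbit of a rational point of minimal period $3$ under $f_c$. *)

From mathcomp Require Import all_boot all_order all_algebra.
Set Implicit Arguments. Unset Strict Implicit. Unset Printing Implicit Defensive.
Import Order.TTheory GRing.Theory Num.Theory.
Local Open Scope ring_scope.

Definition fc (c : rat) (x : rat) : rat := x ^+ 2 + c.

Definition minimal_period (f : rat -> rat) (n : nat) (x : rat) : Prop :=
  (0 < n)%N /\ iter n f x = x /\ (forall k : nat, (0 < k < n)%N -> iter k f x <> x).

Definition has_rational_3cycle (c : rat) : Prop :=
  exists x : rat, minimal_period (fc c) 3 x.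

From mathcomp Require Import all_boot all_order all_algebra.
From mathcomp Require Import ring lra zify.
Import Order.TTheory GRing.Theory Num.Theory.
Local Open Scope ring_scope.
Set Implicit Arguments. Unset Strict Implicit. Unset Printing Implicit Defensive.

(* For a rational 3-cycle x -> f(x) -> f(f(x)) of f_c, the sum u = x + f(x)
   satisfies 4 u^2 (u + 1)^2 c + P(u) = 0 with P of degree 6, u != 0, -1.
   Writing u = a / b in lowest terms gives c (2ab(a + b))^2 = -N(a, b), and a
   polynomial identity yields (c^3 + 2c^2 + c + 1) (2ab(a + b))^6 = pA pB pC pR
   for three binary cubic forms pA, pB, pC and a binary nonic form pR. *)

Lemma prime_dvdzM (p : nat) (x y : int) :
  prime p -> (p %| x * y)%Z -> (p %| x)%Z \/ (p %| y)%Z.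
Proof. by move=> pp; rewrite !dvdzE abszM Euclid_dvdM // => /orP. Qed.

Lemma prime_dvdzX (p : nat) (x : int) (n : nat) :
  prime p -> (p %| x ^+ n)%Z -> (p %| x)%Z.
Proof. by move=> pp; rewrite !dvdzE abszX Euclid_dvdX // => /andP[]. Qed.

Lemma prime_dvdz_coprime (p : nat) (x y : int) :
  prime p -> coprimez x y -> (p %| x)%Z -> (p %| y)%Z -> False.
Proof.
move=> pp; rewrite coprimezE !dvdzE /= => cxy px py.
have : (p %| gcdn `|x| `|y|)%N by rewrite dvdn_gcd px py.
by rewrite (eqP cxy) dvdn1 => /eqP p1; rewrite p1 in pp.
Qed.

(* Among a, b and a + b one is even. *)
Lemma two_dvd_mul_add (a b : int) : (2 %| a * b * (a + b))%Z.
Proof.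
have [a_even|a_odd] := boolP (2 %| a)%Z; first by apply/dvdz_mulr/dvdz_mulr.
have [b_even|b_odd] := boolP (2 %| b)%Z; first by apply/dvdz_mulr/dvdz_mull.
by apply: dvdz_mull; lia.
Qed.

Definition in_ideal2 (w x y : int) : Prop := exists u v : int, w = u * x + v * y.

Lemma in_ideal2_dvd (d w x y : int) :
  in_ideal2 w x y -> (d %| x)%Z -> (d %| y)%Z -> (d %| w)%Z.
Proof. by case=> u [v ->] dx dy; apply: rpredD; apply: dvdz_mull. Qed.

Definition no_common_prime (x y : int) : Prop :=
  forall p : nat, prime p -> (p %| x)%Z -> (p %| y)%Z -> False.

Definition has_prime_divisor (x : int) : Prop :=
  exists2 p : nat, prime p & (p %| x)%Z.

Definition unit_int (x : int) : Prop := x = 1 \/ x = -1.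

Lemma unit_or_prime_divisor (x : int) :
  x != 0 -> unit_int x \/ has_prime_divisor x.
Proof.
move=> x_neq0; case: (ltngtP `|x|%N 1) => [lt1|gt1|eq1].
- by move: lt1 x_neq0; rewrite ltnS leqn0 absz_eq0 => ->.
- right; exists (pdiv `|x|); first exact: pdiv_prime.
  by rewrite dvdzE; exact: pdiv_dvd.
- by left; rewrite /unit_int; lia.
Qed.

Lemma three_distinct_primes (P : nat -> Prop) (x y z : int) :
  (forall p : nat, prime p -> [\/ (p %| x)%Z, (p %| y)%Z | (p %| z)%Z] -> P p) ->
  no_common_prime x y -> no_common_prime x z -> no_common_prime y z ->
  has_prime_divisor x -> has_prime_divisor y -> has_prime_divisor z ->
  exists p1 p2 p3 : nat, [/\ prime p1, prime p2 & prime p3] /\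
    [/\ p1 != p2, p1 != p3 & p2 != p3] /\ [/\ P p1, P p2 & P p3].
Proof.
move=> hP cxy cxz cyz [p pp px] [q pq qy] [r pr rz].
exists p, q, r; split=> //; split.
- split; apply/eqP=> pq_eq; move: pq_eq px qy rz => <- .
  + by move=> px py _; exact: cxy pp px py.
  + by move=> px _ pz; exact: cxz pp px pz.
  + by move=> _ qy qz; exact: cyz pq qy qz.
- by split; apply: hP => //; [apply: Or31|apply: Or32|apply: Or33].
Qed.

Lemma prime_dvd_numq (E : rat) (m N : int) (n p : nat) : prime p ->
  E * (m ^+ n)%:~R = N%:~R -> (p %| N)%Z -> ~ (p %| m)%Z -> (p %| `|numq E|)%N.
Proof.
move=> pp EmN pN pm.
have EmN_int : numq E * m ^+ n = N * denq E.
  by apply: (@intr_inj rat); rewrite [LHS]intrM [RHS]intrM numqE mulrAC EmN.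
have : (p %| numq E * m ^+ n)%Z by rewrite EmN_int; apply: dvdz_mulr.
by case/(prime_dvdzM pp) => [|/(prime_dvdzX pp)].
Qed.

(* 2ab(a + b): its square clears the denominator of c = -N(a, b) / D(a, b). *)
Definition den_base (a b : int) : int := 2 * a * b * (a + b).

Lemma prime_dvd_den_base (p : nat) (a b : int) : prime p ->
  (p %| den_base a b)%Z -> [\/ (p %| a)%Z, (p %| b)%Z | (p %| a + b)%Z].
Proof.
move=> pp pd.
have pabs : (p %| a * b * (a + b))%Z.
  rewrite /den_base -!mulrA in pd.
  case/(prime_dvdzM pp): pd => [p2|]; last by rewrite !mulrA.
  have -> : p = 2%N by apply/eqP; rewrite -(dvdn_prime2 pp).
  exact: two_dvd_mul_add.
case/(prime_dvdzM pp): pabs => [/(prime_dvdzM pp) [pa|pb]|ps].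
- exact: Or31.
- exact: Or32.
- exact: Or33.
Qed.

Definition avoids_den_base (x a b : int) : Prop :=
  forall p : nat, prime p -> (p %| x)%Z -> ~ (p %| den_base a b)%Z.

Lemma avoids_den_base_neq0 (x a b : int) : avoids_den_base x a b -> x != 0.
Proof.
move=> avx; apply/eqP=> x0; apply: (avx 2%N) => //; first by rewrite x0 dvdz0.
exact/dvdz_mulr/dvdz_mulr/dvdz_mulr.
Qed.

Lemma avoids_den_base_of_ideals (x a b : int) (n m k : nat) : coprimez a b ->
  in_ideal2 (b ^+ n) x a -> in_ideal2 (a ^+ m) x b -> in_ideal2 (b ^+ k) x (a + b) ->
  avoids_den_base x a b.
Proof.
move=> cab ia ib isum p pp px /(prime_dvd_den_base pp) pd.
have no_ab : (p %| a)%Z -> (p %| b)%Z -> False := prime_dvdz_coprime pp cab.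
case: pd => [pa|pb|ps].
- exact: no_ab pa (prime_dvdzX pp (in_ideal2_dvd ia px pa)).
- exact: no_ab (prime_dvdzX pp (in_ideal2_dvd ib px pb)) pb.
- have pb : (p %| b)%Z := prime_dvdzX pp (in_ideal2_dvd isum px ps).
  have pa : (p %| a)%Z by rewrite -(addrK b a) rpredB.
  exact: no_ab pa pb.
Qed.

Lemma no_common_prime_of_ideal (x y a b : int) (j n : nat) :
  avoids_den_base x a b -> in_ideal2 (2 ^+ j * b ^+ n) x y -> no_common_prime x y.
Proof.
move=> avx ixy p pp px py; apply: (avx p pp px).
case/(prime_dvdzM pp): (in_ideal2_dvd ixy px py) => /(prime_dvdzX pp) h.
- exact/dvdz_mulr/dvdz_mulr/dvdz_mulr.
- exact/dvdz_mulr/dvdz_mull.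
Qed.

(* The four binary forms whose product is (c^3 + 2c^2 + c + 1) (2ab(a + b))^6. *)
Definition pA (a b : int) : int := a ^+ 3 - a * b ^+ 2 - b ^+ 3.
Definition pB (a b : int) : int := a ^+ 3 + 2 * a ^+ 2 * b + a * b ^+ 2 + b ^+ 3.
Definition pC (a b : int) : int := a ^+ 3 + 2 * a ^+ 2 * b + 3 * a * b ^+ 2 + b ^+ 3.
Definition pR (a b : int) : int :=
  b ^+ 9 + 7 * a * b ^+ 8 + 21 * a ^+ 2 * b ^+ 7 + 26 * a ^+ 3 * b ^+ 6
  - 19 * a ^+ 5 * b ^+ 4 - 9 * a ^+ 6 * b ^+ 3 - a ^+ 7 * b ^+ 2
  - 2 * a ^+ 8 * b - a ^+ 9.

Lemma pos_dvd4 (d : int) : 0 < d -> (d %| 4)%Z -> d \in [:: 1; 2; 4].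
Proof.
case: d => // n _; rewrite dvdzE /= => n_dvd4.
have : (n <= 4)%N by apply: dvdn_leq.
by case: n n_dvd4 => [|[|[|[|[|n]]]]].
Qed.

(* For a numeral b, the unit equation of a cubic factor confines a to
   [-12, 12]; each of these values of a is then refuted numerically. *)
Ltac refute_small_cases :=
  let a := fresh "a" in let n := fresh "n" in
  let a0 := fresh "a0" in let ab0 := fresh "ab0" in
  let ux := fresh "ux" in let uR := fresh "uR" in
  move=> a; rewrite /unit_int /pA /pB /pC /pR => /eqP a0 /eqP ab0 ux uR;
  have : -12 <= a <= 12; [clear uR; nia | move: a0 ab0 ux uR];
  case: a => n; do 13 (case: n => [|n]; first lia); lia.

Lemma small_den_not_units (b : int) : b \in [:: 1; 2; 4] -> forall a : int,
  a != 0 -> a + b != 0 ->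
  [/\ unit_int (pA a b) -> ~ unit_int (pR a b),
      unit_int (pB a b) -> ~ unit_int (pR a b)
    & unit_int (pC a b) -> ~ unit_int (pR a b)].
Proof.
rewrite !inE => /or3P [] /eqP -> a a0 ab0; split; move: a a0 ab0;
  refute_small_cases.
Qed.

Definition divides_factor (p : nat) (a b : int) : Prop :=
  [\/ (p %| pA a b)%Z, (p %| pB a b)%Z, (p %| pC a b)%Z | (p %| pR a b)%Z].

Section Factors.

Variables a b : int.
Hypothesis cab : coprimez a b.

Lemma pA_avoids : avoids_den_base (pA a b) a b.
Proof.
apply: (@avoids_den_base_of_ideals _ _ _ 3 3 3) => //; rewrite /pA.
- by exists (-1), (a ^+ 2 - b ^+ 2); ring.
- by exists 1, (b ^+ 2 + a * b); ring.
- by exists (-1), (a ^+ 2 - a * b); ring.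
Qed.

Lemma pB_avoids : avoids_den_base (pB a b) a b.
Proof.
apply: (@avoids_den_base_of_ideals _ _ _ 3 3 3) => //; rewrite /pB.
- by exists 1, (- b ^+ 2 - 2 * a * b - a ^+ 2); ring.
- by exists 1, (- b ^+ 2 - a * b - 2 * a ^+ 2); ring.
- by exists 1, (- a * b - a ^+ 2); ring.
Qed.

Lemma pC_avoids : avoids_den_base (pC a b) a b.
Proof.
apply: (@avoids_den_base_of_ideals _ _ _ 3 3 3) => //; rewrite /pC.
- by exists 1, (- 3 * b ^+ 2 - 2 * a * b - a ^+ 2); ring.
- by exists 1, (- b ^+ 2 - 3 * a * b - 2 * a ^+ 2); ring.
- by exists (-1), (2 * b ^+ 2 + a * b + a ^+ 2); ring.
Qed.

Lemma pR_avoids : avoids_den_base (pR a b) a b.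
Proof.
apply: (@avoids_den_base_of_ideals _ _ _ 9 9 9) => //; rewrite /pR.
- exists 1, (- 7 * b ^+ 8 - 21 * a * b ^+ 7 - 26 * a ^+ 2 * b ^+ 6
    + 19 * a ^+ 4 * b ^+ 4 + 9 * a ^+ 5 * b ^+ 3 + a ^+ 6 * b ^+ 2
    + 2 * a ^+ 7 * b + a ^+ 8); ring.
- exists (-1), (b ^+ 8 + 7 * a * b ^+ 7 + 21 * a ^+ 2 * b ^+ 6
    + 26 * a ^+ 3 * b ^+ 5 - 19 * a ^+ 5 * b ^+ 3 - 9 * a ^+ 6 * b ^+ 2
    - a ^+ 7 * b - 2 * a ^+ 8); ring.
- exists (-1), (2 * b ^+ 8 + 5 * a * b ^+ 7 + 16 * a ^+ 2 * b ^+ 6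
    + 10 * a ^+ 3 * b ^+ 5 - 10 * a ^+ 4 * b ^+ 4 - 9 * a ^+ 5 * b ^+ 3
    - a ^+ 7 * b - a ^+ 8); ring.
Qed.

(* Resultant-type identities: each pair of factors generates an ideal
   containing some 2^j b^n; first the pairs involving pA, then the others. *)
Lemma pA_coprime_others :
  [/\ no_common_prime (pA a b) (pB a b), no_common_prime (pA a b) (pC a b)
    & no_common_prime (pA a b) (pR a b)].
Proof.
split.
- apply: (@no_common_prime_of_ideal _ _ _ _ 1 5 pA_avoids).
  by exists (2 * a * b + a ^+ 2), (2 * b ^+ 2 - a ^+ 2); rewrite /pA /pB; ring.
- apply: (@no_common_prime_of_ideal _ _ _ _ 1 5 pA_avoids).
  exists (- 4 * b ^+ 2 - 3 * a * b - 2 * a ^+ 2), (- 2 * b ^+ 2 - a * b + 2 * a ^+ 2).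
  by rewrite /pA /pC; ring.
- apply: (@no_common_prime_of_ideal _ _ _ _ 3 11 pA_avoids).
  exists (- 9 * b ^+ 8 - 33 * a ^+ 2 * b ^+ 6 - 30 * a ^+ 3 * b ^+ 5
    + 20 * a ^+ 4 * b ^+ 4 + 18 * a ^+ 5 * b ^+ 3 - a ^+ 6 * b ^+ 2
    + 2 * a ^+ 7 * b + 2 * a ^+ 8), (- b ^+ 2 - 2 * a * b + 2 * a ^+ 2).
  by rewrite /pA /pR; ring.
Qed.

Lemma pB_pC_pR_pairwise_coprime :
  [/\ no_common_prime (pB a b) (pC a b), no_common_prime (pB a b) (pR a b)
    & no_common_prime (pC a b) (pR a b)].
Proof.
split.
- apply: (@no_common_prime_of_ideal _ _ _ _ 1 5 pB_avoids).
  exists (3 * b ^+ 2 + 2 * a * b + a ^+ 2), (- b ^+ 2 - 2 * a * b - a ^+ 2).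
  by rewrite /pB /pC; ring.
- apply: (@no_common_prime_of_ideal _ _ _ _ 3 11 pB_avoids).
  exists (8 * b ^+ 8 - 9 * a * b ^+ 7 - 14 * a ^+ 2 * b ^+ 6 + 3 * a ^+ 3 * b ^+ 5
    + 8 * a ^+ 4 * b ^+ 4 + a ^+ 7 * b), (a * b).
  by rewrite /pB /pR; ring.
- apply: (@no_common_prime_of_ideal _ _ _ _ 3 11 pC_avoids).
  exists (- 343 * b ^+ 8 - 1665 * a * b ^+ 7 - 3500 * a ^+ 2 * b ^+ 6
    - 987 * a ^+ 3 * b ^+ 5 + 2293 * a ^+ 4 * b ^+ 4 + 1338 * a ^+ 5 * b ^+ 3
    + 49 * a ^+ 6 * b ^+ 2 + 237 * a ^+ 7 * b + 151 * a ^+ 8),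
    (351 * b ^+ 2 + 237 * a * b + 151 * a ^+ 2).
  by rewrite /pC /pR; ring.
Qed.

Hypotheses (b_gt0 : 0 < b) (a_neq0 : a != 0) (ab_neq0 : a + b != 0).

(* The cubic factors differ by multiples of 2b, so no two of them are both
   units. *)
Lemma not_units_AB : unit_int (pA a b) -> ~ unit_int (pB a b).
Proof.
have diff : pB a b - pA a b = 2 * b * (a ^+ 2 + a * b + b ^+ 2).
  by rewrite /pA /pB; ring.
move/eqP: a_neq0 => a0; move/eqP: ab_neq0 => ab0 uA uB.
have q_pos : 1 <= a ^+ 2 + a * b + b ^+ 2 by nia.
have bq1 : b * (a ^+ 2 + a * b + b ^+ 2) = 1 by case: uA uB => -> [] -> in diff; nia.
have b1 : b = 1 by nia.
by rewrite b1 in bq1 ab0; nia.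
Qed.

Lemma not_units_AC : unit_int (pA a b) -> ~ unit_int (pC a b).
Proof.
have diff : pC a b - pA a b = 2 * b * (a + b) ^+ 2 by rewrite /pA /pC; ring.
move/eqP: a_neq0 => a0; move/eqP: ab_neq0 => ab0 uA uC.
have s_pos : 1 <= (a + b) ^+ 2 by nia.
have bs1 : b * (a + b) ^+ 2 = 1 by case: uA uC => -> [] -> in diff; nia.
have b1 : b = 1 by nia.
have a_eq : a = -2 by rewrite b1 in bs1 ab0; nia.
by move: uA; rewrite /unit_int /pA a_eq b1; lia.
Qed.

Lemma not_units_BC : unit_int (pB a b) -> ~ unit_int (pC a b).
Proof.
have diff : pC a b - pB a b = 2 * a * b ^+ 2 by rewrite /pB /pC; ring.
move/eqP: a_neq0 => a0 uB uC.
have ab1 : a * b ^+ 2 = 1 \/ a * b ^+ 2 = -1 by case: uB uC => -> [] -> in diff; nia.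
have b1 : b = 1 by nia.
have a1 : a = 1 by rewrite b1 in ab1; move/eqP: ab_neq0; rewrite b1; nia.
by move: uB; rewrite /unit_int /pB a1 b1; lia.
Qed.

(* Modulo b^2, pR + x^3 = k a^8 b for each cubic factor x (with k = -2, 4, 4);
   if x and pR are both units, this forces b | 4. *)
Lemma den_dvd4_of_units (x k S : int) : (k %| 4)%Z ->
  pR a b + x ^+ 3 = b * (k * a ^+ 8 + b * S) ->
  unit_int x -> unit_int (pR a b) -> (b %| 4)%Z.
Proof.
move=> k4 congr ux uR.
have [sum0|sum_neq0] := eqVneq (pR a b + x ^+ 3) 0.
- have bk : (b %| k * a ^+ 8)%Z.
    have kS0 : k * a ^+ 8 + b * S = 0.
      by move/eqP: congr; rewrite sum0 eq_sym mulf_eq0 gt_eqF //= => /eqP.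
    by apply/dvdzP; exists (- S); lia.
  apply: dvdz_trans k4; move: bk; rewrite Gauss_dvdzl //.
  by rewrite coprimezXr // coprimez_sym.
- have b_dvd : (b %| pR a b + x ^+ 3)%Z by rewrite congr; apply/dvdz_mulr/dvdzz.
  apply: dvdz_trans b_dvd _.
  have : pR a b + x ^+ 3 = 2 \/ pR a b + x ^+ 3 = -2.
    by move: sum_neq0; case: ux uR => -> [] ->; lia.
  by case=> ->; apply/dvdzP; [exists 2 | exists (-2)].
Qed.

Lemma not_units_AR : unit_int (pA a b) -> ~ unit_int (pR a b).
Proof.
move=> uA uR; have b4 : (b %| 4)%Z.
  apply: (@den_dvd4_of_units (pA a b) (-2) (4 * a * b ^+ 6 + 18 * a ^+ 2 * b ^+ 5
    + 28 * a ^+ 3 * b ^+ 4 + 6 * a ^+ 4 * b ^+ 3 - 16 * a ^+ 5 * b ^+ 2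
    - 12 * a ^+ 6 * b - 4 * a ^+ 7)) uA uR; first by apply/dvdzP; exists (-2).
  by rewrite /pA /pR; ring.
have [nAR _ _] := small_den_not_units (pos_dvd4 b_gt0 b4) a_neq0 ab_neq0.
exact: nAR uA uR.
Qed.

Lemma not_units_BR : unit_int (pB a b) -> ~ unit_int (pR a b).
Proof.
move=> uB uR; have b4 : (b %| 4)%Z.
  apply: (@den_dvd4_of_units (pB a b) 4 (2 * b ^+ 7 + 10 * a * b ^+ 6
    + 30 * a ^+ 2 * b ^+ 5 + 42 * a ^+ 3 * b ^+ 4 + 24 * a ^+ 4 * b ^+ 3
    + 8 * a ^+ 5 * b ^+ 2 + 14 * a ^+ 6 * b + 14 * a ^+ 7)) uB uR => //.
  by rewrite /pB /pR; ring.
have [_ nBR _] := small_den_not_units (pos_dvd4 b_gt0 b4) a_neq0 ab_neq0.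
exact: nBR uB uR.
Qed.

Lemma not_units_CR : unit_int (pC a b) -> ~ unit_int (pR a b).
Proof.
move=> uC uR; have b4 : (b %| 4)%Z.
  apply: (@den_dvd4_of_units (pC a b) 4 (2 * b ^+ 7 + 16 * a * b ^+ 6
    + 54 * a ^+ 2 * b ^+ 5 + 92 * a ^+ 3 * b ^+ 4 + 84 * a ^+ 4 * b ^+ 3
    + 56 * a ^+ 5 * b ^+ 2 + 38 * a ^+ 6 * b + 20 * a ^+ 7)) uC uR => //.
  by rewrite /pC /pR; ring.
have [_ _ nCR] := small_den_not_units (pos_dvd4 b_gt0 b4) a_neq0 ab_neq0.
exact: nCR uC uR.
Qed.

(* Three of the four factors are not units, and they are pairwise coprime. *)
Lemma three_factor_primes : exists p1 p2 p3 : nat,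
  [/\ prime p1, prime p2 & prime p3] /\ [/\ p1 != p2, p1 != p3 & p2 != p3] /\
  [/\ divides_factor p1 a b, divides_factor p2 a b & divides_factor p3 a b].
Proof.
have [cAB cAC cAR] := pA_coprime_others.
have [cBC cBR cCR] := pB_pC_pR_pairwise_coprime.
have dichotomy x : avoids_den_base x a b -> unit_int x \/ has_prime_divisor x.
  by move/avoids_den_base_neq0/unit_or_prime_divisor.
have nonunit x : avoids_den_base x a b -> ~ unit_int x -> has_prime_divisor x.
  by move=> /dichotomy [].
have [uA|nA] := dichotomy _ pA_avoids.
  apply: (three_distinct_primes _ cBC cBR cCR).
  - by move=> p _ [] pd; [apply: Or42 | apply: Or43 | apply: Or44].
  - exact: nonunit pB_avoids (not_units_AB uA).
  - exact: nonunit pC_avoids (not_units_AC uA).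
  - exact: nonunit pR_avoids (not_units_AR uA).
have [uB|nB] := dichotomy _ pB_avoids.
  apply: (three_distinct_primes _ cAC cAR cCR nA).
  - by move=> p _ [] pd; [apply: Or41 | apply: Or43 | apply: Or44].
  - exact: nonunit pC_avoids (not_units_BC uB).
  - exact: nonunit pR_avoids (not_units_BR uB).
have [uC|nC] := dichotomy _ pC_avoids.
  apply: (three_distinct_primes _ cAB cAR cBR nA nB).
  - by move=> p _ [] pd; [apply: Or41 | apply: Or42 | apply: Or44].
  - exact: nonunit pR_avoids (not_units_CR uC).
apply: (three_distinct_primes _ cAB cAC cBC nA nB nC).
by move=> p _ [] pd; [apply: Or41 | apply: Or42 | apply: Or43].
Qed.

Lemma factor_prime_dvd_numq (E : rat) (p : nat) : prime p ->
  E * (den_base a b ^+ 6)%:~R = (pA a b * pB a b * pC a b * pR a b)%:~R ->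
  divides_factor p a b -> (p %| `|numq E|)%N.
Proof.
move=> pp value pf; apply: (prime_dvd_numq pp value).
- case: pf => pd.
  + exact/dvdz_mulr/dvdz_mulr/dvdz_mulr.
  + exact/dvdz_mulr/dvdz_mulr/dvdz_mull.
  + exact/dvdz_mulr/dvdz_mull.
  + exact/dvdz_mull.
- case: pf => pd.
  + exact: pA_avoids pp pd.
  + exact: pB_avoids pp pd.
  + exact: pC_avoids pp pd.
  + exact: pR_avoids pp pd.
Qed.

End Factors.

(* The parametrisation polynomial P(u) and its homogenisation
   N(a, b) = b^6 P(a / b). *)
Definition cycle_poly (u : rat) : rat :=
  1 + 4 * u + 9 * u ^+ 2 + 8 * u ^+ 3 + 4 * u ^+ 4 + 2 * u ^+ 5 + u ^+ 6.

Definition cycle_form (a b : int) : int :=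
  a ^+ 6 + 2 * a ^+ 5 * b + 4 * a ^+ 4 * b ^+ 2 + 8 * a ^+ 3 * b ^+ 3
  + 9 * a ^+ 2 * b ^+ 4 + 4 * a * b ^+ 5 + b ^+ 6.

(* The period-3 equation f^3(x) = x, up to a cofactor, is the product of the
   fixed-point equation and the relation between c and u = x + f(x). *)
Lemma period3_factorization (c x : rat) :
  (4 * (x + fc c x) ^+ 2 * (x + fc c x + 1) ^+ 2 * c + cycle_poly (x + fc c x))
    * (fc c x - x)
  = (iter 3 (fc c) x - x) *
    (1 + 3 * c + 4 * c ^+ 2 + c ^+ 3 + 3 * x + 10 * x * c + 5 * x * c ^+ 2
     + 9 * x ^+ 2 + 15 * x ^+ 2 * c + 3 * x ^+ 2 * c ^+ 2 + 13 * x ^+ 3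
     + 10 * x ^+ 3 * c + 11 * x ^+ 4 + 3 * x ^+ 4 * c + 5 * x ^+ 5 + x ^+ 6).
Proof. rewrite /= /fc /cycle_poly; ring. Qed.

Lemma three_cycle_parameter (c : rat) : has_rational_3cycle c ->
  exists u : rat, [/\ u != 0, u + 1 != 0 & 4 * u ^+ 2 * (u + 1) ^+ 2 * c + cycle_poly u = 0].
Proof.
case=> x [_ [x_period3 x_not_fixed]].
have fx_neq : fc c x - x != 0 by rewrite subr_eq0; apply/eqP; apply: (x_not_fixed 1%N).
have := period3_factorization c x; rewrite x_period3 subrr mul0r.
move/eqP; rewrite mulf_eq0 (negbTE fx_neq) orbF => /eqP rel.
exists (x + fc c x); split=> //; apply/eqP => u_eq; move: rel.
- by rewrite u_eq /cycle_poly; lra.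
- have -> : x + fc c x = -1 by lra.
  by rewrite /cycle_poly; lra.
Qed.

Lemma homogenized_parameter (c : rat) (a b : int) : b != 0 ->
  4 * (a%:~R / b%:~R) ^+ 2 * (a%:~R / b%:~R + 1) ^+ 2 * c + cycle_poly (a%:~R / b%:~R) = 0 ->
  c * (den_base a b ^+ 2)%:~R = - (cycle_form a b)%:~R.
Proof.
move=> b_neq0; set u := a%:~R / b%:~R => rel.
have b_neq0' : b%:~R != 0 :> rat by rewrite intr_eq0.
have cleared : c * (den_base a b ^+ 2)%:~R + (cycle_form a b)%:~R
    = b%:~R ^+ 6 * (4 * u ^+ 2 * (u + 1) ^+ 2 * c + cycle_poly u).
  by rewrite /u /den_base /cycle_form /cycle_poly; field.
by apply/eqP; rewrite -subr_eq0 opprK cleared rel mulr0.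
Qed.

Lemma three_cycle_int_parameter (c : rat) : has_rational_3cycle c ->
  exists a b : int, [/\ 0 < b, a != 0, a + b != 0, coprimez a b
    & c * (den_base a b ^+ 2)%:~R = - (cycle_form a b)%:~R].
Proof.
case/three_cycle_parameter=> u [u_neq0 u1_neq0 rel].
have u_eq : u = (numq u)%:~R / (denq u)%:~R by rewrite divq_num_den.
have d_neq0 : (denq u)%:~R != 0 :> rat by rewrite intr_eq0 denq_neq0.
exists (numq u), (denq u); split.
- exact: denq_gt0.
- by rewrite numq_eq0.
- apply: contraNneq u1_neq0 => sum0.
  have n_eq : numq u = - denq u by apply/eqP; rewrite -addr_eq0 sum0.
  by rewrite u_eq n_eq intrN mulNr divff // addNr.
- exact: coprime_num_den.
- by apply: homogenized_parameter; rewrite ?denq_neq0 // -u_eq.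
Qed.

(* D^3 g(-N / D) = pA pB pC pR for g(c) = c^3 + 2c^2 + c + 1, where
   D = (2ab(a + b))^2 and N = N(a, b). *)
Lemma factorization (a b : int) :
  (den_base a b ^+ 2) ^+ 3 - cycle_form a b * (den_base a b ^+ 2) ^+ 2
    + 2 * cycle_form a b ^+ 2 * den_base a b ^+ 2 - cycle_form a b ^+ 3
  = pA a b * pB a b * pC a b * pR a b.
Proof. by rewrite /den_base /cycle_form /pA /pB /pC /pR; ring. Qed.

Lemma cubic_value (c : rat) (a b : int) :
  c * (den_base a b ^+ 2)%:~R = - (cycle_form a b)%:~R ->
  (c ^+ 3 + 2 * c ^+ 2 + c + 1) * (den_base a b ^+ 6)%:~R
    = (pA a b * pB a b * pC a b * pR a b)%:~R.
Proof.
move=> hc; rewrite -factorization.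
set D : rat := (den_base a b ^+ 2)%:~R.
have -> : (den_base a b ^+ 6)%:~R = D ^+ 3 by rewrite /D -rmorphXn -exprM.
transitivity ((c * D) ^+ 3 + 2 * (c * D) ^+ 2 * D + (c * D) * D ^+ 2 + D ^+ 3).
  by ring.
by rewrite hc /D; ring.
Qed.

Theorem corollary2 (c : rat) :
  has_rational_3cycle c ->
  exists p1 p2 p3 : nat,
    [/\ prime p1, prime p2 & prime p3] /\
    [/\ p1 != p2, p1 != p3 & p2 != p3] /\
    [/\ (p1 %| `|numq (c ^+ 3 + 2 * c ^+ 2 + c + 1)|)%N,
        (p2 %| `|numq (c ^+ 3 + 2 * c ^+ 2 + c + 1)|)%N &
        (p3 %| `|numq (c ^+ 3 + 2 * c ^+ 2 + c + 1)|)%N].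
Proof.
case/three_cycle_int_parameter=> a [b [b_gt0 a_neq0 ab_neq0 cab hc]].
have value := cubic_value hc.
have [p1 [p2 [p3 [[pp1 pp2 pp3] [distinct [f1 f2 f3]]]]]] :=
  three_factor_primes cab b_gt0 a_neq0 ab_neq0.
exists p1, p2, p3; split=> //; split=> //.
by split; apply: (factor_prime_dvd_numq cab _ value).
Qed.
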